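(* Let $A\in\mathbb Z^{d\times n}$ with $\ker(A)\cap\mathbb N^n=\{0\}$, and let $I(A)\subseteq G(A)$ be the set of $g\in G(A)$ whose distance is not reduced by any element of $D(A)$. If $z\in\ker(A)\setminus G(A)$ is such that no element of $D(A)$ reduces the distance of $z$, then for any decomposition $z=g_1+\dots+g_k$ with $g_i\in G(A)$, $z^+=\sum_i g_i^+$ and $z^-=\sum_i g_i^-$, we have $g_i\in I(A)$ for each $i\in\{1,\dots,k\}$.
   Context: For $z\in\mathbb Z^n$, $z^\pm\in\mathbb N^n$ are the unique vectors with disjoint supports and $z=z^+-z^-$; $\|\cdot\|$ is the $1$-norm; $\le$ is coordinatewise. $G(A)$ is the set of nonzero $z\in\ker(A)$ admitting no decomposition $z=u+v$ with $u,v\in\ker(A)\setminus\{0\}$, $z^+=u^++v^+$, $z^-=u^-+v^-$. A positive (resp. negative) distance decomposition of $z\in\ker(A)$ is $z=u+v$ with $u,v\in\ker(A)\setminus\{0\}$, $u^+\le z^+$ (resp. $u^-\le z^-$), $\|v\|<\|z\|$; $D(A)$ is the set of nonzero $z\in\ker(A)$ admitting neither a positive nor a negative distance decomposition. For nonzero $w\in\ker(A)$, $u\in\ker(A)$ reduces the distance of $w$ if there exist $(p,q)\in\{(w^+,w^-),(w^-,w^+)\}$ and $\varepsilon\in\{\pm1\}$ with $p+\varepsilon u\in\mathbb N^n$ and $\|p+\varepsilon u-q\|<\|w\|$. *)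

From mathcomp Require Import all_boot all_order all_algebra.
Set Implicit Arguments. Unset Strict Implicit. Unset Printing Implicit Defensive.
Import Order.TTheory GRing.Theory Num.Theory.
Local Open Scope ring_scope.

Section Defs.
Variables (d n : nat) (A : 'M[int]_(d, n)).

Definition inker (z : 'cV[int]_n) : Prop := A *m z = 0.

Definition vpos (z : 'cV[int]_n) : 'cV[int]_n := \col_i Num.max (z i 0) 0.
Definition vneg (z : 'cV[int]_n) : 'cV[int]_n := \col_i Num.max (- z i 0) 0.

Definition norm1 (z : 'cV[int]_n) : int := \sum_i `|z i 0|.

Definition lev (u v : 'cV[int]_n) : Prop := forall i, u i 0 <= v i 0.
Definition natvec (u : 'cV[int]_n) : Prop := forall i, 0 <= u i 0.

Definition inG (z : 'cV[int]_n) : Prop :=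
  inker z /\ z <> 0 /\
  ~ (exists u v, [/\ inker u /\ inker v, u <> 0 /\ v <> 0, z = u + v,
        vpos z = vpos u + vpos v & vneg z = vneg u + vneg v]).

Definition pos_dist_dec (z : 'cV[int]_n) : Prop :=
  exists u v, [/\ inker u /\ inker v, u <> 0 /\ v <> 0, z = u + v,
     lev (vpos u) (vpos z) & norm1 v < norm1 z].
Definition neg_dist_dec (z : 'cV[int]_n) : Prop :=
  exists u v, [/\ inker u /\ inker v, u <> 0 /\ v <> 0, z = u + v,
     lev (vneg u) (vneg z) & norm1 v < norm1 z].

Definition inD (z : 'cV[int]_n) : Prop :=
  [/\ inker z, z <> 0, ~ pos_dist_dec z & ~ neg_dist_dec z].

Definition reduces (u w : 'cV[int]_n) : Prop :=
  inker u /\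
  exists (p q : 'cV[int]_n) (eps : int),
    [/\ (p, q) = (vpos w, vneg w) \/ (p, q) = (vneg w, vpos w),
        eps = 1 \/ eps = -1,
        natvec (p + eps *: u) &
        norm1 (p + eps *: u - q) < norm1 w].

Definition inI (g : 'cV[int]_n) : Prop :=
  inG g /\ forall u, inD u -> ~ reduces u g.

End Defs.

(** Write [z^+ = g_i^+ + R] and [z^- = g_i^- + S] with [R, S] the sums of the
    other parts, so [R, S >= 0] and [||z|| = ||g_i|| + ||R|| + ||S||].  If
    [u] reduces the distance of [g_i] via [p + eps u - q], then adding [R] to
    [p] keeps it nonnegative, and adding [R] to [p] and [S] to [q] raises the
    distance by at most [||R|| + ||S||], i.e. by no more than [||z||] exceeds
    [||g_i||].  Hence [u] also reduces the distance of [z], which no element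
    of [D(A)] does. *)
From mathcomp Require Import all_boot all_order all_algebra.
From mathcomp Require Import zify.
Import Order.TTheory GRing.Theory Num.Theory.
Local Open Scope ring_scope.

Section DistanceReduction.
Context {d n : nat} (A : 'M[int]_(d, n)).
Implicit Types (p q u w x y z R S : 'cV[int]_n).

Lemma natvec_vpos w : natvec (vpos w).
Proof. by move=> j; rewrite mxE le_max lexx orbT. Qed.

Lemma natvec_vneg w : natvec (vneg w).
Proof. by move=> j; rewrite mxE le_max lexx orbT. Qed.

Lemma natvec_sum (I : finType) (P : pred I) (F : I -> 'cV[int]_n) :
  (forall j, natvec (F j)) -> natvec (\sum_(j | P j) F j).
Proof. by move=> F_nat j; rewrite summxE sumr_ge0 // => l _; apply: F_nat. Qed.

Lemma bigD1_natvec {I : finType} {F : I -> 'cV[int]_n} i :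
  (forall j, natvec (F j)) -> exists2 R, natvec R & \sum_j F j = F i + R.
Proof.
move=> F_nat; exists (\sum_(j | j != i) F j); first exact: natvec_sum.
exact: bigD1.
Qed.

Lemma norm1N x : norm1 (- x) = norm1 x.
Proof. by apply: eq_bigr => j _; rewrite mxE normrN. Qed.

Lemma norm1D_le x y : norm1 (x + y) <= norm1 x + norm1 y.
Proof. by rewrite -big_split ler_sum // => j _; rewrite mxE ler_normD. Qed.

Lemma norm1D_natvec {x y} :
  natvec x -> natvec y -> norm1 (x + y) = norm1 x + norm1 y.
Proof.
move=> x_nat y_nat; rewrite -big_split; apply: eq_bigr => j _.
by rewrite mxE !ger0_norm ?addr_ge0.
Qed.

Lemma norm1_vpos_vneg w : norm1 w = norm1 (vpos w) + norm1 (vneg w).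
Proof.
by rewrite -big_split; apply: eq_bigr => j _; rewrite /= !mxE; lia.
Qed.

Lemma dist_reduction_shift {p q R S x} :
  natvec p -> natvec q -> natvec R -> natvec S ->
  natvec (p + x) -> norm1 (p + x - q) < norm1 p + norm1 q ->
  natvec (p + R + x) /\
  norm1 (p + R + x - (q + S)) < norm1 (p + R) + norm1 (q + S).
Proof.
move=> p_nat q_nat R_nat S_nat px_nat lt_dist; split.
  by rewrite addrAC => j; rewrite mxE addr_ge0.
have -> : p + R + x - (q + S) = (p + x - q) + (R - S).
  by rewrite opprD [p + R + x]addrAC addrACA.
rewrite (norm1D_natvec p_nat R_nat) (norm1D_natvec q_nat S_nat).
rewrite [X in _ < X]addrACA.
apply: (le_lt_trans (norm1D_le _ _)); rewrite ltr_leD //.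
by rewrite -(norm1N S) norm1D_le.
Qed.

Lemma reduces_extend {u w z R S} :
  natvec R -> natvec S -> vpos z = vpos w + R -> vneg z = vneg w + S ->
  reduces A u w -> reduces A u z.
Proof.
move=> R_nat S_nat Pz Nz [Ku [p [q [e [pq_w e_unit pu_nat lt_dist]]]]].
split=> //; rewrite [norm1 w]norm1_vpos_vneg in lt_dist.
have [Pw_nat Nw_nat] := (natvec_vpos w, natvec_vneg w).
case: pq_w => [[-> ->] | [-> ->]] in pu_nat lt_dist *.
- have [] := dist_reduction_shift Pw_nat Nw_nat R_nat S_nat pu_nat lt_dist.
  exists (vpos z), (vneg z), e.
  by rewrite [norm1 z]norm1_vpos_vneg Pz Nz; split=> //; left.
- rewrite [X in _ < X]addrC in lt_dist.
  have [] := dist_reduction_shift Nw_nat Pw_nat S_nat R_nat pu_nat lt_dist.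
  exists (vneg z), (vpos z), e.
  by rewrite [norm1 z]norm1_vpos_vneg [X in _ < X]addrC Pz Nz; split=> //; right.
Qed.

End DistanceReduction.

Theorem proposition8p11 (d n : nat) (A : 'M[int]_(d, n)) :
  (forall z : 'cV[int]_n, inker A z -> natvec z -> z = 0) ->
  forall z : 'cV[int]_n,
    inker A z -> ~ inG A z ->
    (forall u, inD A u -> ~ reduces A u z) ->
    forall (k : nat) (g : 'I_k -> 'cV[int]_n),
      (forall i, inG A (g i)) ->
      z = \sum_(i < k) g i ->
      vpos z = \sum_(i < k) vpos (g i) ->
      vneg z = \sum_(i < k) vneg (g i) ->
      forall i, inI A (g i).
Proof.
move=> _ z _ _ z_unreduced k g g_G _ Pz Nz i.
split=> [|u u_D u_red]; first exact: g_G.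
have [R R_nat PzR] := bigD1_natvec i (fun j => natvec_vpos (g j)).
have [S S_nat NzS] := bigD1_natvec i (fun j => natvec_vneg (g j)).
apply: (z_unreduced u u_D).
by apply: (reduces_extend A R_nat S_nat _ _ u_red); rewrite ?Pz ?Nz.
Qed.
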